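(* Let $0<p<1$ and let $G$ be a simple graph with $m$ edges. Then $\mathcal{E}_p(G) \geq 2m^{p/2}$.
   Context: For a graph $G$ with adjacency eigenvalues $\lambda_1,\dots,\lambda_n$ and $p>0$, the $p$-energy is $\mathcal{E}_p(G) = \sum_{i=1}^n |\lambda_i|^p$. *)

From HB Require Import structures.
From mathcomp Require Import all_boot all_order all_algebra.
From mathcomp Require Import all_classical all_reals all_analysis.
Set Implicit Arguments. Unset Strict Implicit. Unset Printing Implicit Defensive.
Import Order.TTheory GRing.Theory Num.Theory.
Local Open Scope ring_scope.

Definition simple_graph (n : nat) (e : rel 'I_n) : Prop :=
  symmetric e /\ irreflexive e.

Definition num_edges (n : nat) (e : rel 'I_n) : nat :=
  #|[set ij : 'I_n * 'I_n | (ij.1 < ij.2)%N && e ij.1 ij.2]|.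

Definition adjmx (R : nzRingType) (n : nat) (e : rel 'I_n) : 'M[R]_n :=
  \matrix_(i, j) (e i j)%:R.

(* s is the list of eigenvalues (with multiplicity) of A:
   the characteristic polynomial of A splits as prod_(x in s) (X - x). *)
Definition is_eigenvalue_list (R : comNzRingType) (n : nat) (A : 'M[R]_n)
    (s : seq R) : Prop :=
  char_poly A = \prod_(x <- s) ('X - x%:P).

Definition p_energy (R : realType) (s : seq R) (p : R) : R :=
  \sum_(x <- s) (`|x| `^ p).

From HB Require Import structures.
From mathcomp Require Import all_boot all_order all_algebra.
From mathcomp Require Import all_classical all_reals all_analysis.
From mathcomp Require Import ring lra.
Set Implicit Arguments. Unset Strict Implicit. Unset Printing Implicit Defensive.
Import Order.TTheory GRing.Theory Num.Theory.
Local Open Scope ring_scope.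

(* Let the λ_i be the eigenvalues of the adjacency matrix A. From tr A = 0 and
   tr A^2 = 2m we get Σ λ_i = 0 and Σ λ_i^2 = 2m; the eigenvalues of A^2 are the
   λ_i^2 because det(X^2 - A^2) = det(X - A) det(X + A).  Put T = (Σ |λ_i|)/2.
   The zero sum forces |λ_i| <= T for each i, so 2m = Σ λ_i^2 <= T Σ |λ_i| = 2T^2.
   For p <= 1, concavity of t |-> t^p on [0, T] gives |λ|^p >= |λ| T^(p-1), whence
   Σ |λ_i|^p >= 2T T^(p-1) = 2T^p >= 2m^(p/2). *)

Section EigenvalueList.
Variable R : comNzRingType.
Implicit Types s : seq R.

Lemma size_eigenvalue_list n (A : 'M[R]_n) s : is_eigenvalue_list A s -> size s = n.
Proof.
by move=> hA; have := size_char_poly A; rewrite hA size_prod_XsubC => -[].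
Qed.

Lemma mxtrace_eigenvalue_list n (A : 'M[R]_n) s :
  is_eigenvalue_list A s -> \tr A = \sum_(x <- s) x.
Proof.
move=> hA; have sz := size_eigenvalue_list hA.
case: n A hA sz => [|m] A hA sz.
  by case: s hA sz => // _ _; rewrite big_nil /mxtrace big_ord0.
apply: oppr_inj; rewrite -char_poly_trace // hA /=.
by rewrite -[m]/(m.+1.-1) -sz coefPn_prod_XsubC ?sz.
Qed.

Lemma char_polyN n (A : 'M[R]_n) : char_poly (- A) = (-1) ^+ n * (char_poly A \Po - 'X).
Proof.
rewrite /char_poly -det_map_mx -detZ; congr (\det _).
apply/matrixP => i j; rewrite !mxE /= comp_polyB comp_polyC polyCN.
by case: (i == j); rewrite ?mulr1n ?mulr0n ?comp_polyX ?comp_poly0; ring.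
Qed.

Lemma prod_XsubC_comp_opp s :
  (-1) ^+ size s * (\prod_(x <- s) ('X - x%:P) \Po - 'X) = \prod_(x <- s) ('X + x%:P).
Proof.
elim: s => [|x s IHs]; first by rewrite !big_nil comp_polyC mulr1.
rewrite !big_cons comp_polyM -IHs comp_polyB comp_polyX comp_polyC /=.
by rewrite exprS; ring.
Qed.

Lemma eigenvalue_list_opp n (A : 'M[R]_n) s :
  is_eigenvalue_list A s -> is_eigenvalue_list (- A) [seq - x | x <- s].
Proof.
move=> hA; rewrite /is_eigenvalue_list char_polyN hA -(size_eigenvalue_list hA).
rewrite prod_XsubC_comp_opp big_map.
by apply: eq_bigr => x _; rewrite polyCN opprK.
Qed.

Lemma char_poly_mulmx_sqr n (A : 'M[R]_n) :
  char_poly (A *m A) \Po 'X^2 = char_poly A * char_poly (- A).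
Proof.
rewrite /char_poly -det_mulmx -det_map_mx; congr (\det _).
rewrite /char_poly_mx map_mxB map_scalar_mx /= comp_polyX -map_mx_comp.
rewrite (@eq_map_mx _ _ _ _ polyC) => [|a]; last exact: comp_polyC.
rewrite map_mxN map_mxM opprK mulmxBl !mulmxDr -scalar_mxM scalar_mxC.
by rewrite opprD addrA addrK expr2.
Qed.

End EigenvalueList.

Lemma eigenvalue_list_sqr (R : idomainType) n (A : 'M[R]_n) s :
  is_eigenvalue_list A s -> is_eigenvalue_list (A *m A) [seq x ^+ 2 | x <- s].
Proof.
move=> hA; apply/eqP; rewrite -subr_eq0 -(comp_poly_eq0 _ (q := 'X^2)) ?size_polyXn //.
rewrite comp_polyB subr_eq0 char_poly_mulmx_sqr hA (eigenvalue_list_opp hA) !big_map.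
rewrite -big_split rmorph_prod /=; apply/eqP/eq_bigr => x _.
by rewrite comp_polyB comp_polyX comp_polyC polyCN opprK rmorphXn /=; ring.
Qed.

Section AdjacencyMatrix.
Variables (n : nat) (e : rel 'I_n).

Lemma handshake : simple_graph e -> (\sum_i \sum_j e i j = 2 * num_edges e)%N.
Proof.
move=> [e_sym e_irr].
have num_edgesE : num_edges e = (\sum_(i : 'I_n) \sum_(j : 'I_n) ((i < j)%N && e i j))%N.
  rewrite /num_edges -sum1_card big_mkcond pair_big /=.
  by apply: eq_bigr => -[i j] _; rewrite inE; case: (_ && _).
rewrite mul2n -addnn {1}num_edgesE num_edgesE [in X in (_ + X)%N]exchange_big -big_split.
apply: eq_bigr => i _; rewrite -big_split; apply: eq_bigr => j _ /=.
by rewrite (e_sym j i); case: ltngtP => [||/val_inj ->]; rewrite ?e_irr ?addn0.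
Qed.

Lemma mxtrace_adjmx (R : nzRingType) : irreflexive e -> \tr (adjmx R e) = 0.
Proof. by move=> e_irr; apply: big1 => i _; rewrite mxE e_irr. Qed.

Lemma mxtrace_adjmx_sqr (R : nzRingType) : symmetric e ->
  \tr (adjmx R e *m adjmx R e) = (\sum_i \sum_j e i j)%:R.
Proof.
move=> e_sym; rewrite natr_sum; apply: eq_bigr => i _.
rewrite mxE natr_sum; apply: eq_bigr => j _.
by rewrite !mxE (e_sym j i); case: (e i j); rewrite ?mulr1 ?mulr0.
Qed.

End AdjacencyMatrix.

Section ZeroSumPowR.
Variable R : realType.
Implicit Types (s : seq R) (p : R).

Lemma zero_sum_norm_le_half s x : \sum_(y <- s) y = 0 -> x \in s ->
  `|x| <= (\sum_(y <- s) `|y|) / 2.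
Proof.
move=> s0 xs; rewrite ler_pdivlMr // (big_rem x xs) /=.
move: s0; rewrite (big_rem x xs) /= => /eqP; rewrite addr_eq0 => /eqP x_eq.
have : `|x| <= \sum_(y <- rem x s) `|y| by rewrite {1}x_eq normrN; exact: ler_norm_sum.
lra.
Qed.

Lemma powR_chord_le p (T u : R) : 0 < T -> 0 <= u <= T -> p <= 1 ->
  u * (T `^ p / T) <= u `^ p.
Proof.
move=> T0 /andP[u0 uT] p1.
have [->|uN0] := eqVneq u 0; first by rewrite mul0r powR_ge0.
have uT0 : 0 < u / T by rewrite divr_gt0 // lt_neqAle eq_sym uN0.
have uT1 : u / T <= 1 by rewrite ler_pdivrMr // mul1r.
rewrite -{2}(divfK (lt0r_neq0 T0) u) (powRM _ (ltW uT0) (ltW T0)) mulrCA mulrC.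
by rewrite ler_wpM2r ?powR_ge0 // ger1_powR ?uT0.
Qed.

Lemma zero_sum_powR_sum_ge s p : 0 < p -> p <= 1 -> \sum_(x <- s) x = 0 ->
  2 * ((\sum_(x <- s) x ^+ 2) / 2) `^ (p / 2) <= \sum_(x <- s) `|x| `^ p.
Proof.
move=> p0 p1 s0.
set T := (\sum_(x <- s) `|x|) / 2.
have xT x : x \in s -> `|x| <= T by exact: zero_sum_norm_le_half.
have sumT : \sum_(x <- s) `|x| = 2 * T by rewrite /T mulrC divfK.
have sqT : (\sum_(x <- s) x ^+ 2) / 2 <= T ^+ 2.
  have : \sum_(x <- s) x ^+ 2 <= \sum_(x <- s) `|x| * T.
    rewrite big_seq [leRHS]big_seq; apply: ler_sum => x xs.
    by rewrite -real_normK ?num_real // expr2 ler_wpM2l ?xT.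
  by rewrite -mulr_suml sumT ler_pdivrMr //; lra.
have sq_ge0 : 0 <= (\sum_(x <- s) x ^+ 2) / 2.
  by rewrite divr_ge0 // sumr_ge0 // => x _; rewrite sqr_ge0.
have [T0|T0] := eqVneq T 0.
  have sq0 : (\sum_(x <- s) x ^+ 2) / 2 = 0.
    by apply/le_anti; rewrite sq_ge0 andbT (le_trans sqT) // T0 expr0n.
  rewrite sq0 powR0 ?mulr0; last by rewrite mulf_neq0 ?invr_eq0 ?lt0r_neq0.
  by apply: sumr_ge0 => x _; exact: powR_ge0.
have T_gt0 : 0 < T.
  rewrite lt_neqAle eq_sym T0 -(pmulr_rge0 T (x := 2)) // -sumT.
  by apply: sumr_ge0 => x _; exact: normr_ge0.
apply: (@le_trans _ _ (2 * T `^ p)).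
  have -> : T `^ p = (T ^+ 2) `^ (p / 2).
    by rewrite -powR_mulrn ?ltW // -powRrM mulrC divfK.
  rewrite ler_pM2l //; apply: ge0_ler_powR; rewrite ?nnegrE //.
  - by rewrite divr_ge0 ?ltW.
  - by rewrite exprn_ge0 ?ltW.
have -> : 2 * T `^ p = \sum_(x <- s) `|x| * (T `^ p / T).
  by rewrite -mulr_suml sumT -mulrA (mulrCA T) mulfV ?mulr1 // lt0r_neq0.
rewrite big_seq [leRHS]big_seq; apply: ler_sum => x xs.
by apply: powR_chord_le; rewrite ?normr_ge0 ?xT.
Qed.

End ZeroSumPowR.

Theorem proposition5p3 (R : realType) (p : R) (n : nat) (e : rel 'I_n)
    (s : seq R) :
  0 < p -> p < 1 -> simple_graph e ->
  is_eigenvalue_list (adjmx R e) s ->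
  2 * ((num_edges e)%:R `^ (p / 2)) <= p_energy s p.
Proof.
move=> p_gt0 p_lt1 G hs; have [e_sym e_irr] := G.
have sum_eig : \sum_(x <- s) x = 0.
  by rewrite -(mxtrace_eigenvalue_list hs) mxtrace_adjmx.
have sum_sqr : \sum_(x <- s) x ^+ 2 = (2 * num_edges e)%:R.
  rewrite -(big_map (fun x => x ^+ 2) xpredT id).
  by rewrite -(mxtrace_eigenvalue_list (eigenvalue_list_sqr hs)) mxtrace_adjmx_sqr // handshake.
have := zero_sum_powR_sum_ge p_gt0 (ltW p_lt1) sum_eig.
by rewrite sum_sqr natrM mulrAC divff ?mul1r.
Qed.
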